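(* For every $f\in\mathcal{F}_3$ and every $\mathbf{x}\in[0,1]^3$, letting $k\in\{1,2,3\}$ be the unique index with $f\in\mathcal{S}_3^k$, $$f^{+}(\mathbf{x})=\min\Big(\min_{i\in\{4k-2,4k-1,4k,4k+1\}}\Big(\lambda_{i0}+\sum_{j=1}^3\lambda_{ij}x_j\Big),\ \min_{\ell\in\{1,14\}}\Big(\lambda_{\ell0}+\sum_{j=1}^3\lambda_{\ell j}x_j\Big)\Big),$$ where the vectors $\boldsymbol\lambda_i=(\lambda_{i0},\lambda_{i1},\lambda_{i2},\lambda_{i3})$ are: $\boldsymbol\lambda_1=(0,f(1),f(2),f(3))$; $\boldsymbol\lambda_2=(f(2)-f(2|3),\,f(1)-f(2)+f(2|3),\,f(2|3),\,f(3|2))$; $\boldsymbol\lambda_3=(f(1)-f(1|3),\,f(1|3),\,f(2|3),\,f(3|1))$; $\boldsymbol\lambda_4=(f(2)-f(2|1),\,f(1|2),\,f(2|1),\,f(3|2))$; $\boldsymbol\lambda_5=(f(2,3)-f(3|1)-f(2|1),\,f(2|1)+f(1,3)-f(2,3),\,f(2|1),\,f(3|1))$; $\boldsymbol\lambda_6=(f(1)-f(1|3),\,f(1|3),\,f(2)-f(1)+f(1|3),\,f(3|1))$; $\boldsymbol\lambda_7=(f(2)-f(2|3),\,f(1|3),\,f(2|3),\,f(3|2))$; $\boldsymbol\lambda_8=(f(2)-f(2|1),\,f(1|2),\,f(2|1),\,f(3|1))$; $\boldsymbol\lambda_9=(f(1,3)-f(1|2)-f(3|2),\,f(1|2),\,f(1|2)+f(2,3)-f(1,3),\,f(3|2))$;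 $\boldsymbol\lambda_{10}=(f(1)-f(1|2),\,f(1|2),\,f(2|1),\,f(3)-f(2)+f(2|1))$; $\boldsymbol\lambda_{11}=(f(2)-f(2|3),\,f(1|2),\,f(2|3),\,f(3|2))$; $\boldsymbol\lambda_{12}=(f(3)-f(3|1),\,f(1|3),\,f(2|1),\,f(3|1))$; $\boldsymbol\lambda_{13}=(f(1,2)-f(1|3)-f(2|3),\,f(1|3),\,f(2|3),\,f(2|3)+f(1,3)-f(1,2))$; $\boldsymbol\lambda_{14}=(f(1,2)+f(1,3)+f(2,3)-2,\,1-f(2,3),\,1-f(1,3),\,1-f(1,2))$.
   Context: $[n]=\{1,\dots,n\}$. A set function $f:2^{[n]}\to\mathbb{R}_+$ is monotone if $f(S)\le f(T)$ for $S\subseteq T$, submodular if $f(S)+f(T)\ge f(S\cap T)+f(S\cup T)$. $\mathcal{F}_n$ is the set of monotone submodular $f:2^{[n]}\to\mathbb{R}_+$ with $f(\emptyset)=0$, $f([n])=1$. Write $f(i)=f(\{i\})$, $f(i,j)=f(\{i,j\})$, $f(i|j)=f(\{i,j\})-f(\{j\})$. Define $\mathcal{F}_3^1=\{f\in\mathcal{F}_3: f(3|2)\ge f(3|1),\ f(2|3)\ge f(2|1)\}$, $\mathcal{F}_3^2=\{f\in\mathcal{F}_3: f(3|1)\ge f(3|2),\ f(1|3)\ge f(1|2)\}$, $\mathcal{F}_3^3=\{f\in\mathcal{F}_3: f(2|1)\ge f(2|3),\ f(1|2)\ge f(1|3)\}$, and $\mathcal{S}_3^k=\mathcal{F}_3^k\setminus\bigcup_{j<k}\mathcal{F}_3^j$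 for $k=1,2,3$ (these partition $\mathcal{F}_3$). For $\mathbf{x}\in[0,1]^n$, the concave closure is $f^{+}(\mathbf{x})=\max\sum_{S\subseteq[n]}\theta(S)f(S)$ over $\theta:2^{[n]}\to\mathbb{R}_{\ge0}$ with $\sum_S\theta(S)=1$ and $\sum_{S\ni i}\theta(S)=x_i$ for all $i\in[n]$. *)

From mathcomp Require Import all_boot all_order all_algebra.
From mathcomp Require Import reals.
Set Implicit Arguments. Unset Strict Implicit. Unset Printing Implicit Defensive.
Import Order.TTheory GRing.Theory Num.Theory.
Local Open Scope ring_scope.

Section Defs.
Variable R : realType.

(* ground set [3] = {1,2,3} is encoded as 'I_3 = {0,1,2}: element i is e i *)
Definition e1 : 'I_3 := @Ordinal 3 0 isT.
Definition e2 : 'I_3 := @Ordinal 3 1 isT.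
Definition e3 : 'I_3 := @Ordinal 3 2 isT.

Definition monotone (n : nat) (f : {set 'I_n} -> R) : Prop :=
  forall S T : {set 'I_n}, S \subset T -> f S <= f T.
Definition submodular (n : nat) (f : {set 'I_n} -> R) : Prop :=
  forall S T : {set 'I_n}, f (S :&: T) + f (S :|: T) <= f S + f T.

Definition inF (n : nat) (f : {set 'I_n} -> R) : Prop :=
  [/\ forall S, 0 <= f S, monotone f, submodular f,
      f set0 = 0 & f setT = 1].

Definition f1 (f : {set 'I_3} -> R) (i : 'I_3) : R := f [set i].
Definition f2 (f : {set 'I_3} -> R) (i j : 'I_3) : R := f [set i; j].
Definition fc (f : {set 'I_3} -> R) (i j : 'I_3) : R := f2 f i j - f1 f j.

Definition inF3_1 (f : {set 'I_3} -> R) : Prop :=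
  inF f /\ (fc f e3 e2 >= fc f e3 e1 /\ fc f e2 e3 >= fc f e2 e1).
Definition inF3_2 (f : {set 'I_3} -> R) : Prop :=
  inF f /\ (fc f e3 e1 >= fc f e3 e2 /\ fc f e1 e3 >= fc f e1 e2).
Definition inF3_3 (f : {set 'I_3} -> R) : Prop :=
  inF f /\ (fc f e2 e1 >= fc f e2 e3 /\ fc f e1 e2 >= fc f e1 e3).

Definition inS3 (k : nat) (f : {set 'I_3} -> R) : Prop :=
  match k with
  | 1 => inF3_1 f
  | 2 => inF3_2 f /\ ~ inF3_1 f
  | 3 => inF3_3 f /\ ~ inF3_1 f /\ ~ inF3_2 f
  | _ => False
  end.

(* concave closure: v is the maximum of sum_S theta(S) f(S) over feasible theta *)
Definition feasible (n : nat) (x : 'I_n -> R) (theta : {set 'I_n} -> R) : Prop :=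
  [/\ forall S, 0 <= theta S,
      \sum_(S : {set 'I_n}) theta S = 1 &
      forall i : 'I_n, \sum_(S : {set 'I_n} | i \in S) theta S = x i].

Definition objective (n : nat) (f : {set 'I_n} -> R) (theta : {set 'I_n} -> R) : R :=
  \sum_(S : {set 'I_n}) theta S * f S.

Definition concave_closure_eq (n : nat) (f : {set 'I_n} -> R) (x : 'I_n -> R) (v : R) : Prop :=
  (exists theta, feasible x theta /\ objective f theta = v) /\
  (forall theta, feasible x theta -> objective f theta <= v).

Definition lam (f : {set 'I_3} -> R) (i : nat) : R * R * R * R :=
  let a := f1 f e1 in let b := f1 f e2 in let c := f1 f e3 in
  let f12 := f2 f e1 e2 in let f13 := f2 f e1 e3 in let f23 := f2 f e2 e3 in
  let g e e' := fc f e e' in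
  match i with
  | 1 => (0, a, b, c)
  | 2 => (b - g e2 e3, a - b + g e2 e3, g e2 e3, g e3 e2)
  | 3 => (a - g e1 e3, g e1 e3, g e2 e3, g e3 e1)
  | 4 => (b - g e2 e1, g e1 e2, g e2 e1, g e3 e2)
  | 5 => (f23 - g e3 e1 - g e2 e1, g e2 e1 + f13 - f23, g e2 e1, g e3 e1)
  | 6 => (a - g e1 e3, g e1 e3, b - a + g e1 e3, g e3 e1)
  | 7 => (b - g e2 e3, g e1 e3, g e2 e3, g e3 e2)
  | 8 => (b - g e2 e1, g e1 e2, g e2 e1, g e3 e1)
  | 9 => (f13 - g e1 e2 - g e3 e2, g e1 e2, g e1 e2 + f23 - f13, g e3 e2)
  | 10 => (a - g e1 e2, g e1 e2, g e2 e1, c - b + g e2 e1)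
  | 11 => (b - g e2 e3, g e1 e2, g e2 e3, g e3 e2)
  | 12 => (c - g e3 e1, g e1 e3, g e2 e1, g e3 e1)
  | 13 => (f12 - g e1 e3 - g e2 e3, g e1 e3, g e2 e3, g e2 e3 + f13 - f12)
  | 14 => (f12 + f13 + f23 - 2, 1 - f23, 1 - f13, 1 - f12)
  | _ => (0, 0, 0, 0)
  end.

Definition aff (f : {set 'I_3} -> R) (i : nat) (x : 'I_3 -> R) : R :=
  let: (l0, l1, l2, l3) := lam f i in l0 + l1 * x e1 + l2 * x e2 + l3 * x e3.

End Defs.

From mathcomp Require Import all_boot all_order all_algebra.
From mathcomp Require Import reals ring lra.
Import Order.TTheory GRing.Theory Num.Theory.
Set Implicit Arguments. Unset Strict Implicit. Unset Printing Implicit Defensive.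
Local Open Scope ring_scope.

(* f^+(x) is the value of a linear program in theta, whose dual asks for an
   affine function l0 + sum_j l_j x_j dominating f on every subset S (read as
   its indicator vector).  Every lambda_i attached to S_3^k is dual feasible:
   the eight inequalities follow from monotonicity, submodularity and the two
   inequalities defining F_3^k.  Weak duality thus bounds f^+ by the minimum.
   Conversely, with a = k and {b, c} the other two elements, the hyperplanes
   x_1 + x_2 + x_3 = 1, 2 and x_a + x_b = 1, x_a + x_c = 1 cut the cube into six
   regions; on each of them an explicit theta supported on four sets is
   feasible and its value is exactly one of the six affine functions. *)

Section ConcaveClosureLP.
Variables (R : realType) (n : nat).
Implicit Types (f theta : {set 'I_n} -> R) (x : 'I_n -> R) (s : seq ({set 'I_n} * R)).

Definition dual_feasible f (l0 : R) (l : 'I_n -> R) : Prop :=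
  forall S, f S <= l0 + \sum_(i in S) l i.

Lemma objective_le_dual f x theta l0 l :
  dual_feasible f l0 l -> feasible x theta ->
  objective f theta <= l0 + \sum_i l i * x i.
Proof.
move=> hl [theta_ge0 theta_sum theta_marg].
apply: (@le_trans _ _ (\sum_S theta S * (l0 + \sum_(i in S) l i))).
  by apply: ler_sum => S _; rewrite ler_wpM2l.
suff -> : \sum_S theta S * (l0 + \sum_(i in S) l i) = l0 + \sum_i l i * x i by [].
under eq_bigr do rewrite mulrDr big_distrr /=.
rewrite big_split /= -big_distrl /= theta_sum mul1r; congr (_ + _).
under eq_bigr do rewrite big_mkcond /=.
rewrite exchange_big /=; apply: eq_bigr => i _.
rewrite mulrC -theta_marg big_distrl [RHS]big_mkcond /=.
by apply: eq_bigr => S _; case: (i \in S); rewrite ?mul0r.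
Qed.

Lemma concave_closure_eq_witness f x (v : R) theta :
  feasible x theta -> v <= objective f theta ->
  (forall theta', feasible x theta' -> objective f theta' <= v) ->
  concave_closure_eq f x v.
Proof.
move=> htheta hv hub; split => //; exists theta; split => //.
by apply/le_anti; rewrite hv hub.
Qed.

Definition mixture s (S : {set 'I_n}) : R := \sum_(p <- s) p.2 * (p.1 == S)%:R.

Lemma sum_point_mass (P : pred {set 'I_n}) (A : {set 'I_n}) (F : {set 'I_n} -> R) :
  \sum_(S | P S) F S * (A == S)%:R = if P A then F A else 0.
Proof.
rewrite big_mkcond (bigD1 A) //= eqxx mulr1 big1 ?addr0 // => S /negbTE.
by rewrite eq_sym => ->; rewrite mulr0; case: (P S).
Qed.

Lemma mixture_feasible x s :
  all (fun p => 0 <= p.2) s -> \sum_(p <- s) p.2 = 1 ->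
  (forall i, \sum_(p <- s | i \in p.1) p.2 = x i) -> feasible x (mixture s).
Proof.
move=> /allP s_ge0 s_sum s_marg; split.
- move=> S; rewrite /mixture big_seq sumr_ge0 // => p /s_ge0 p_ge0.
  by rewrite mulr_ge0 ?ler0n.
- rewrite /mixture exchange_big /= -[RHS]s_sum; apply: eq_bigr => p _.
  by rewrite (sum_point_mass _ p.1 (fun _ => p.2)).
- move=> i; rewrite /mixture exchange_big /= -s_marg [RHS]big_mkcond /=.
  by apply: eq_bigr => p _; rewrite (sum_point_mass _ p.1 (fun _ => p.2)).
Qed.

Lemma objective_mixture f s : objective f (mixture s) = \sum_(p <- s) p.2 * f p.1.
Proof.
rewrite /objective /mixture; under eq_bigr do rewrite big_distrl /=.
rewrite exchange_big /=; apply: eq_bigr => p _.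
under eq_bigr do rewrite mulrAC.
by rewrite (sum_point_mass _ p.1 (fun S => p.2 * f S)).
Qed.

End ConcaveClosureLP.

Lemma ord3P (i : 'I_3) : [\/ i = e1, i = e2 | i = e3].
Proof.
by case: i => [[|[|[|m]]] lt_i3] //; [apply: Or31 | apply: Or32 | apply: Or33];
  apply: val_inj.
Qed.

Lemma sum_ord3 (R : nmodType) (g : 'I_3 -> R) : \sum_(j < 3) g j = g e1 + g e2 + g e3.
Proof.
rewrite !big_ord_recl big_ord0 addr0 addrA.
by congr (g _ + g _ + g _); apply: val_inj.
Qed.

Lemma eq_set3 (A B : {set 'I_3}) :
  e1 \in A = (e1 \in B) -> e2 \in A = (e2 \in B) -> e3 \in A = (e3 \in B) -> A = B.
Proof. by move=> h1 h2 h3; apply/setP => i; case: (ord3P i) => ->. Qed.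

Lemma set3_ind (P : {set 'I_3} -> Prop) :
  P set0 -> P [set e1] -> P [set e2] -> P [set e3] ->
  P [set e1; e2] -> P [set e1; e3] -> P [set e2; e3] -> P setT ->
  forall S, P S.
Proof.
move=> P0 P1 P2 P3 P12 P13 P23 PT S.
case h1: (e1 \in S); case h2: (e2 \in S); case h3: (e3 \in S);
  [ have -> : S = setT | have -> : S = [set e1; e2] | have -> : S = [set e1; e3]
  | have -> : S = [set e1] | have -> : S = [set e2; e3] | have -> : S = [set e2]
  | have -> : S = [set e3] | have -> : S = set0 ] => //;
  by apply: eq_set3; rewrite ?h1 ?h2 ?h3 !inE.
Qed.

Lemma set2_sortE :
  ([set e2; e1] = [set e1; e2]) * ([set e3; e1] = [set e1; e3]) *
  ([set e3; e2] = [set e2; e3]).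
Proof. by split; [split|]; apply: setUC. Qed.

Lemma dual_feasible3 (R : realType) (f : {set 'I_3} -> R) l0 l :
  f set0 <= l0 /\ f [set e1] <= l0 + l e1 /\ f [set e2] <= l0 + l e2 /\
  f [set e3] <= l0 + l e3 /\ f [set e1; e2] <= l0 + (l e1 + l e2) /\
  f [set e1; e3] <= l0 + (l e1 + l e3) /\ f [set e2; e3] <= l0 + (l e2 + l e3) /\
  f setT <= l0 + (l e1 + l e2 + l e3) ->
  dual_feasible f l0 l.
Proof.
move=> [h0 [h1 [h2 [h3 [h12 [h13 [h23 hT]]]]]]]; apply: set3_ind;
  (* [-?val_eqE -?eqnE] decides the equalities between e1, e2, e3 by computation. *)
  by rewrite big_mkcond sum_ord3 !inE -?val_eqE -?eqnE /= ?addr0 ?add0r.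
Qed.

Definition lam_const (R : realType) (f : {set 'I_3} -> R) (i : nat) : R := (lam f i).1.1.1.

Definition lam_coef (R : realType) (f : {set 'I_3} -> R) (i : nat) (j : 'I_3) : R :=
  let: (_, l1, l2, l3) := lam f i in [:: l1; l2; l3]`_j.

Lemma aff_lam (R : realType) (f : {set 'I_3} -> R) i (x : 'I_3 -> R) :
  aff f i x = lam_const f i + \sum_j lam_coef f i j * x j.
Proof.
rewrite sum_ord3 /aff /lam_const /lam_coef.
by case: (lam f i) => [[[l0 l1] l2] l3]; rewrite !addrA.
Qed.

Ltac lam_simpl := rewrite /lam_const /lam_coef /lam /fc /f1 /f2 /= ?set2_sortE.

Section SubmodularOnThree.
Variable R : realType.
Implicit Types (f : {set 'I_3} -> R) (x : 'I_3 -> R).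

Definition inF3_ineqs f : Prop :=
  let a := f [set e1] in let b := f [set e2] in let c := f [set e3] in
  let p := f [set e1; e2] in let q := f [set e1; e3] in let r := f [set e2; e3] in
  [/\ f set0 = 0, f setT = 1, [/\ 0 <= a, 0 <= b & 0 <= c],
      [/\ [/\ a <= p, a <= q & b <= p], [/\ b <= r, c <= q & c <= r] &
          [/\ p <= 1, q <= 1 & r <= 1]] &
      [/\ [/\ p <= a + b, q <= a + c & r <= b + c] &
          [/\ 1 + a <= p + q, 1 + b <= p + r & 1 + c <= q + r]]].

Lemma inF_ineqs f : inF f -> inF3_ineqs f.
Proof.
case=> f_ge0 f_mono f_sub f0 fT.
have mono (S T : {set 'I_3}) : S \subset T -> f S <= f T by apply: f_mono.
have sub (S T U V : {set 'I_3}) : S :&: T = U -> S :|: T = V -> f U + f V <= f S + f T.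
  by move=> <- <-; apply: f_sub.
split=> //; first split.
- by split; apply: mono; apply/subsetP => i; rewrite !inE => /eqP ->; rewrite eqxx ?orbT.
- by split; apply: mono; apply/subsetP => i; rewrite !inE => /eqP ->; rewrite eqxx ?orbT.
- by split; rewrite -fT; apply/mono/subsetT.
split; split.
1-3: by rewrite -[leLHS]add0r -f0; apply: sub; apply: eq_set3; rewrite !inE.
all: by rewrite -fT addrC; apply: sub; apply: eq_set3; rewrite !inE.
Qed.

Lemma inS3_inF k f : inS3 k f -> inF f.
Proof. by case: k => [|[|[|[|k]]]] //=; [case | case=> [[]] | case=> [[]]]. Qed.

Definition facets (k : nat) : seq nat :=
  [:: 1; 14; 4 * k - 2; 4 * k - 1; 4 * k; 4 * k + 1]%N.

Lemma facetsE :
  (facets 1 = [:: 1; 14; 2; 3; 4; 5]%N) * (facets 2 = [:: 1; 14; 6; 7; 8; 9]%N) *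
  (facets 3 = [:: 1; 14; 10; 11; 12; 13]%N).
Proof. by []. Qed.

(* Making the six values of [f] opaque atoms keeps [lra] fast. *)
Ltac lra_on_values f :=
  set (a := f [set e1]) in *; set (b := f [set e2]) in *; set (c := f [set e3]) in *;
  set (p := f [set e1; e2]) in *; set (q := f [set e1; e3]) in *;
  set (r := f [set e2; e3]) in *; clearbody a b c p q r; lra.

Ltac check_dual f := apply: dual_feasible3; lam_simpl; lra_on_values f.

Lemma lam_corner_dual_feasible f (i : nat) : inF f -> i \in [:: 1; 14]%N ->
  dual_feasible f (lam_const f i) (lam_coef f i).
Proof.
move=> /inF_ineqs[f0 fT [a0 b0 c0] [[ap aq bp] [br cq cr] [p1 q1 r1]]].
move=> [[pab qac rbc] [pq pr qr]].
by rewrite !inE => /orP[]/eqP->; check_dual f.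
Qed.

Lemma lam_block_dual_feasible f k (i : nat) : inS3 k f -> i \in drop 2 (facets k) ->
  dual_feasible f (lam_const f i) (lam_coef f i).
Proof.
move=> hS; have := inF_ineqs (inS3_inF hS).
case=> f0 fT [a0 b0 c0] [[ap aq bp] [br cq cr] [p1 q1 r1]] [[pab qac rbc] [pq pr qr]].
case: k hS => [|[|[|[|k]]]] // hS; rewrite facetsE /=;
  [case: hS => _ [c1 c2] | case: hS => [[_ [c1 c2]] _] | case: hS => [[_ [c1 c2]] _]];
  rewrite /fc /f1 /f2 ?set2_sortE in c1 c2;
  by rewrite !inE => /or4P[]/eqP->; check_dual f.
Qed.

Lemma objective_le_aff f k (i : nat) x theta : inS3 k f -> i \in facets k ->
  feasible x theta -> objective f theta <= aff f i x.
Proof.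
move=> hS hi htheta; rewrite aff_lam; apply: objective_le_dual htheta.
move: hi; rewrite -[facets k](cat_take_drop 2) mem_cat => /orP[].
  exact: lam_corner_dual_feasible (inS3_inF hS).
exact: lam_block_dual_feasible.
Qed.

End SubmodularOnThree.

Section CubeRegions.
Variables (R : realType) (x : 'I_3 -> R) (a b c : 'I_3).
Hypotheses (x01 : forall i, 0 <= x i <= 1) (abc_cover : forall j, j \in [:: a; b; c]).
Hypotheses (neq_ab : a != b) (neq_ac : a != c) (neq_bc : b != c).

(* Entry r is feasible on the r-th region of the cube: x a + x b + x c <= 1,
   x a + x b + x c >= 2, and then the four sign patterns of x a + x b - 1 and
   x a + x c - 1. *)
Definition region_mixtures : seq (seq ({set 'I_3} * R)) :=
  let s := x a + x b + x c in
  [:: [:: (set0, 1 - s); ([set a], x a); ([set b], x b); ([set c], x c)];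
      [:: ([set b; c], 1 - x a); ([set a; c], 1 - x b); ([set a; b], 1 - x c);
          (setT, s - 2)];
      [:: ([set a], x a); ([set b], 1 - x a - x c); ([set c], 1 - x a - x b);
          ([set b; c], s - 1)];
      [:: ([set a], 1 - x c); ([set c], 1 - x a - x b); ([set a; c], x a + x c - 1);
          ([set b; c], x b)];
      [:: ([set a], 1 - x b); ([set b], 1 - x a - x c); ([set a; b], x a + x b - 1);
          ([set b; c], x c)];
      [:: ([set a], 2 - s); ([set a; b], x a + x b - 1); ([set a; c], x a + x c - 1);
          ([set b; c], 1 - x a)]].

Lemma forall_abc (P : 'I_3 -> Prop) : P a -> P b -> P c -> forall j, P j.
Proof. by move=> Pa Pb Pc j; move: (abc_cover j); rewrite !inE => /or3P[]/eqP->. Qed.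

Ltac check_mixture neqE :=
  apply: mixture_feasible;
  [ rewrite /= andbT; repeat (apply/andP; split); lra
  | rewrite !big_cons big_nil /=; lra
  | apply: forall_abc; rewrite !big_cons big_nil /= !inE ?eqxx ?neqE /=; lra ].

Lemma region_mixture_feasible :
  exists2 r, (r < 6)%N & feasible x (mixture (nth [::] region_mixtures r)).
Proof.
have /andP[xa0 xa1] := x01 a; have /andP[xb0 xb1] := x01 b.
have /andP[xc0 xc1] := x01 c.
have neq_ba : b != a by rewrite eq_sym.
have neq_ca : c != a by rewrite eq_sym.
have neq_cb : c != b by rewrite eq_sym.
have neqE := (negbTE neq_ab, negbTE neq_ac, negbTE neq_bc, negbTE neq_ba,
  negbTE neq_ca, negbTE neq_cb).
have [s_le1|s_gt1] := lerP (x a + x b + x c) 1.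
  by exists 0%N => //; check_mixture neqE.
have [s_ge2|s_lt2] := lerP 2 (x a + x b + x c).
  by exists 1%N => //; check_mixture neqE.
have [ab_le1|ab_gt1] := lerP (x a + x b) 1; have [ac_le1|ac_gt1] := lerP (x a + x c) 1.
- by exists 2%N => //; check_mixture neqE.
- by exists 3%N => //; check_mixture neqE.
- by exists 4%N => //; check_mixture neqE.
- by exists 5%N => //; check_mixture neqE.
Qed.

Lemma region_attains f (ids : seq nat) : size ids = 6 ->
  (forall r, (r < 6)%N ->
     \sum_(p <- nth [::] region_mixtures r) p.2 * f p.1 = aff f (nth 0%N ids r) x) ->
  exists2 i, i \in ids & exists2 theta, feasible x theta & objective f theta = aff f i x.
Proof.
move=> size_ids values; have [r r_lt6 feasible_r] := region_mixture_feasible.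
exists (nth 0%N ids r); first by rewrite mem_nth ?size_ids.
by exists (mixture (nth [::] region_mixtures r)); rewrite // objective_mixture values.
Qed.

End CubeRegions.

Lemma aff_attained (R : realType) (f : {set 'I_3} -> R) (x : 'I_3 -> R) k :
  (1 <= k <= 3)%N -> f set0 = 0 -> f setT = 1 -> (forall i, 0 <= x i <= 1) ->
  exists2 i, i \in facets k &
    exists2 theta, feasible x theta & objective f theta = aff f i x.
Proof.
move=> hk f0 fT x01.
case: k hk => [|[|[|[|k]]]] // _; rewrite facetsE;
  [ apply: (@region_attains _ x e1 e2 e3) | apply: (@region_attains _ x e2 e1 e3)
  | apply: (@region_attains _ x e3 e1 e2) ] => //.
all: try by move=> j; case: (ord3P j) => ->.
all: by case=> [|[|[|[|[|[|r]]]]]] // _;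
  rewrite /= !big_cons big_nil /aff; lam_simpl; rewrite ?f0 ?fT; ring.
Qed.

Theorem mainTheorem5 (R : realType) (f : {set 'I_3} -> R) (x : 'I_3 -> R)
  (k : nat) :
  inF f ->
  (forall i, 0 <= x i <= 1) ->
  (1 <= k <= 3)%N ->
  inS3 k f ->
  concave_closure_eq f x
    (Num.min
       (Num.min (Num.min (aff f (4 * k - 2) x) (aff f (4 * k - 1) x))
                (Num.min (aff f (4 * k) x) (aff f (4 * k + 1) x)))
       (Num.min (aff f 1 x) (aff f 14 x))).
Proof.
move=> hF x01 hk hS.
have [f0 fT] : f set0 = 0 /\ f setT = 1 by case: hF.
have [i hi [theta htheta hval]] := aff_attained hk f0 fT x01.
apply: concave_closure_eq_witness htheta _ _.
  rewrite hval; move: hi; rewrite /facets !inE => /orP[/eqP->|/orP[/eqP->|/or4P[]/eqP->]];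
  by rewrite !ge_min lexx ?orbT.
move=> theta' htheta'.
have le_aff j : j \in facets k -> objective f theta' <= aff f j x.
  by move=> hj; apply: objective_le_aff hS hj htheta'.
by rewrite !le_min !le_aff // /facets !inE eqxx ?orbT.
Qed.
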